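(* If $(A_n)_{n=0}^{\infty}$ is an Appell sequence, the following statements are equivalent: (a) for all integers $n\geq0$, $A_n=A^*_n$, i.e. the Appell sequence is self-dual; (b) for all partitions $\lambda$, $A_{\lambda}=A_{\lambda'}$, where $\lambda'$ is the conjugate partition; (c) for all even integers $n>0$, $c_n=0$.
   Context: An Appell sequence is a sequence of polynomials $(A_n)_{n\ge0}$ with $A_0=1$ and $A_n'=nA_{n-1}$ for $n\ge1$; it satisfies $\sum_k A_k(x)t^k/k!=e^{xt}f_A(t)$ with $f_A(0)=1$, and the constants $c_k$ are defined by $\log f_A(t)=\sum_{k\ge1}c_kt^k/k!$. For a partition $\lambda$ of length $r$, let $(n_1,\dots,n_r)=(\lambda_r,\lambda_{r-1}+1,\dots,\lambda_1+r-1)$ and $A_\lambda=\operatorname{Wr}[A_{n_1},\dots,A_{n_r}]/\Delta(n_1,\dots,n_r)$, where $\operatorname{Wr}$ is the Wronskian and $\Delta$ the Vandermonde determinant $\prod_{i<j}(x_j-x_i)$. The dual sequence is $A^*_n=A_{(1^n)}$, with $(1^n)=(1,\dots,1)$ ($n$ ones). *)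

From mathcomp Require Import all_boot all_order all_algebra.
Set Implicit Arguments. Unset Strict Implicit. Unset Printing Implicit Defensive.
Import GRing.Theory.
Local Open Scope ring_scope.

Section Appell.
Variable R : fieldType.

Definition is_appell (A : nat -> {poly R}) : Prop :=
  A 0%N = 1 /\ forall n : nat, (A n.+1)^`() = A n *+ n.+1.

(* f_A(t) = sum_k A_k(0) t^k/k!  (set x = 0 in the generating function);
   here truncated at degree k, as a polynomial in t. *)
Definition fA_trunc (A : nat -> {poly R}) (k : nat) : {poly R} :=
  \poly_(i < k.+1) ((A i).[0] / (i`!)%:R).

(* c_k = k! [t^k] log f_A(t), with log f = sum_{m>=1} (-1)^(m+1)/m (f-1)^m
   (formal power series; only m <= k and coefficients of degree <= k matter). *)
Definition appell_c (A : nat -> {poly R}) (k : nat) : R :=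
  (k`!)%:R *
  (\sum_(1 <= m < k.+1) (((-1) ^+ m.+1 / m%:R) *: (fA_trunc A k - 1) ^+ m))`_k.

End Appell.

Definition is_partition (l : seq nat) : bool :=
  sorted geq l && all (fun x => 0 < x)%N l.

Definition conj_part (l : seq nat) : seq nat :=
  mkseq (fun j => count (fun x => j.+1 <= x)%N l) (head 0%N l).

(* (n_1,...,n_r) = (l_r, l_{r-1}+1, ..., l_1 + r - 1), 0-indexed. *)
Definition part_degs (l : seq nat) (i : nat) : nat :=
  (nth 0%N l (size l - i.+1) + i)%N.

Section Wronskian.
Variable R : fieldType.

Definition wronskian (r : nat) (F : 'I_r -> {poly R}) : {poly R} :=
  \det (\matrix_(i < r, j < r) (F j)^`(i)).

Definition vandermonde (r : nat) (x : 'I_r -> R) : R :=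
  \prod_(i < r) \prod_(j < r | (i < j)%N) (x j - x i).

Definition A_part (A : nat -> {poly R}) (l : seq nat) : {poly R} :=
  (vandermonde (fun i : 'I_(size l) => (part_degs l i)%:R))^-1
    *: wronskian (fun i : 'I_(size l) => A (part_degs l i)).

Definition A_dual (A : nat -> {poly R}) (n : nat) : {poly R} :=
  A_part A (nseq n 1%N).

End Wronskian.

From mathcomp Require Import all_boot all_order all_algebra.
Set Implicit Arguments. Unset Strict Implicit. Unset Printing Implicit Defensive.
Import GRing.Theory.
From mathcomp Require Import ring zify.

(* Let [h_k = A_k / k!] be the coefficients of [e^{xt} f_A(t)], [hbar] those of the inverse
   series, and [B_n = n! (-1)^n hbar_n]: this is the Appell sequence with generating function
   [e^{xt} / f_A(-t)].  The upper triangular Toeplitz matrices of [h] and [hbar] are inverse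
   to each other.  For a partition with [r] parts and first part [s], the degrees of [A_lambda]
   and the numbers [r + b - lambda'_(b+1)] enumerate [0, r + s), so Jacobi's complementary minor
   theorem turns [Wr[A_(n_i)]] into [c * Wr[B_(n'_j)]] for the conjugate partition, with [c]
   independent of [A].  The monomials [x^n] satisfy [B = A], which identifies [c] with the
   ratio of the Vandermonde factors; hence [A_lambda = B_(lambda')] and in particular
   [A^*_n = B_n], giving (a) <-> (b).  Finally [A = B] iff [f_A(t) f_A(-t) = 1], iff
   [log f_A] is odd, which is (c); this last step compares the logarithmic derivatives of the
   truncations of [f_A(t) f_A(-t)] modulo powers of [t]. *)

Definition col_length (l : seq nat) (b : nat) : nat := count (fun x => b < x) l.

Definition comp_degs (l : seq nat) (b : nat) : nat := size l + b - col_length l b.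

(* The row degrees [part_degs l j] and the column degrees [comp_degs l b] together
   enumerate [0, r + s), where [r = size l] and [s = head 0 l] (Macdonald, I.(1.7)). *)
Definition degs_perm (l : seq nat) (k : nat) : nat :=
  if k < size l then part_degs l k else comp_degs l (k - size l).

Section PartitionDegrees.
Variable l : seq nat.
Hypothesis l_sorted : sorted geq l.
Local Notation r := (size l).
Local Notation s := (head 0 l).

Lemma nth_part_homo i j : i <= j -> j < r -> nth 0 l j <= nth 0 l i.
Proof.
move=> le_ij lt_jr; have geq_trans : transitive geq by move=> ? ? ? /= /[swap]; apply: leq_trans.
by apply: (sorted_leq_nth geq_trans leqnn) => //; rewrite inE (leq_ltn_trans le_ij).
Qed.

Lemma nth_part_le_head i : nth 0 l i <= s.
Proof.
by case: (ltnP i r) => [lt_ir | le_ri]; [rewrite -nth0 nth_part_homo | rewrite nth_default].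
Qed.

Lemma col_length_le_size b : col_length l b <= r.
Proof. exact: count_size. Qed.

Lemma col_length_homo b b' : b <= b' -> col_length l b' <= col_length l b.
Proof. by move=> le_bb'; apply: sub_count => x /=; apply: leq_ltn_trans. Qed.

Lemma col_length_gt b i : i < r -> b < nth 0 l i -> i < col_length l b.
Proof.
move=> lt_ir lt_b; rewrite /col_length -(cat_take_drop i.+1 l) count_cat.
suff -> : count (fun x => b < x) (take i.+1 l) = i.+1 by apply: leq_addr.
apply/eqP; rewrite -[X in _ == X](size_takel lt_ir) -all_count.
apply/(all_nthP 0) => k; rewrite size_takel // => lt_ki; rewrite nth_take //.
by apply: leq_trans lt_b (nth_part_homo _ _).
Qed.

Lemma col_length_le b i : i < r -> nth 0 l i <= b -> col_length l b <= i.
Proof.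
move=> lt_ir le_b; rewrite /col_length -(cat_take_drop i l) count_cat.
have -> : count (fun x => b < x) (drop i l) = 0.
  apply/eqP; rewrite -leqn0 leqNgt -has_count; apply/hasPn => x /(nthP 0) [k].
  rewrite size_drop => lt_k <-; rewrite nth_drop -leqNgt; apply: leq_trans le_b.
  by apply: nth_part_homo; [apply: leq_addr | rewrite -ltn_subRL].
by rewrite addn0 (leq_trans (count_size _ _)) // size_take; case: ltnP => // /ltnW.
Qed.

Lemma part_degs_lt j : j < r -> part_degs l j < r + s.
Proof. move=> lt_jr; have := nth_part_le_head (r - j.+1); rewrite /part_degs; lia. Qed.

Lemma part_degs_incr j j' : j < j' -> j' < r -> part_degs l j < part_degs l j'.
Proof.
move=> lt_jj' lt_j'r; have := @nth_part_homo (r - j'.+1) (r - j.+1).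
by rewrite /part_degs; lia.
Qed.

Lemma comp_degs_lt b : b < s -> comp_degs l b < r + s.
Proof. by rewrite /comp_degs; lia. Qed.

Lemma comp_degs_incr b b' : b < b' -> comp_degs l b < comp_degs l b'.
Proof.
move=> lt_bb'; have := col_length_homo (ltnW lt_bb').
have := col_length_le_size b; have := col_length_le_size b'.
by rewrite /comp_degs; lia.
Qed.

(* Row [i = r - j - 1] meets column [b] iff [b < nth 0 l i]; this decides on which
   side of [part_degs l j] the value [comp_degs l b] falls. *)
Lemma part_degs_neq_comp_degs j b : j < r -> part_degs l j != comp_degs l b.
Proof.
move=> lt_jr; have lt_ir : r - j.+1 < r by lia.
have := col_length_le_size b; rewrite /part_degs /comp_degs.
case: (ltnP b (nth 0 l (r - j.+1))) => [lt_b | le_b];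
  [have := col_length_gt lt_ir lt_b | have := col_length_le lt_ir le_b]; lia.
Qed.

Lemma degs_perm_lt k : k < r + s -> degs_perm l k < r + s.
Proof.
move=> lt_k; rewrite /degs_perm; case: (ltnP k r) => [lt_kr | le_rk]; first exact: part_degs_lt.
by apply: comp_degs_lt; lia.
Qed.

Lemma degs_perm_inj k k' : k < r + s -> k' < r + s -> degs_perm l k = degs_perm l k' -> k = k'.
Proof.
wlog lt_kk' : k k' / k < k'.
  move=> W lt_k lt_k' eq_kk'; case: (ltngtP k k') => // [lt | lt]; first exact: W.
  by apply/esym/W.
rewrite /degs_perm => _ lt_k'; case: (ltnP k r) => lt_kr; case: (ltnP k' r) => lt_k'r.
- by move/eqP; rewrite ltn_eqF // part_degs_incr.
- by move/eqP; rewrite (negbTE (part_degs_neq_comp_degs _ lt_kr)).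
- lia.
- by move/eqP; rewrite ltn_eqF // comp_degs_incr //; lia.
Qed.

End PartitionDegrees.

Local Open Scope ring_scope.

Lemma deriv1 (R : nzRingType) : (1 : {poly R})^`() = 0.
Proof. by rewrite -polyC1 derivC. Qed.

Section CharZero.
Variable R : fieldType.
Hypothesis R_char0 : [pchar R] =i pred0.

Lemma char0_natf_neq0 n : (0 < n)%N -> n%:R != 0 :> R.
Proof. by move/pcharf0P: R_char0 => ->; rewrite -lt0n. Qed.

Lemma char0_fact_neq0 n : n`!%:R != 0 :> R.
Proof. exact/char0_natf_neq0/fact_gt0. Qed.

Lemma char0_deriv_eq0 (p : {poly R}) : p^`() = 0 -> p = (p.[0])%:P.
Proof.
move=> dp0; apply/polyP => -[|i]; first by rewrite coefC horner_coef0.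
have /eqP := congr1 (fun q : {poly R} => q`_i) dp0.
rewrite coef_deriv coef0 coefC -mulr_natr mulf_eq0 (negbTE (char0_natf_neq0 (ltn0Sn i))).
by rewrite orbF => /eqP.
Qed.

End CharZero.

Section Appell.
Variable R : fieldType.
Hypothesis R_char0 : [pchar R] =i pred0.
Variable A : nat -> {poly R}.
Hypothesis A_appell : is_appell A.

Lemma derivn_appell n i : (A n)^`(i) = A (n - i) *+ n ^_ i.
Proof.
case: A_appell => A0 AS; elim: i => [|i IH]; first by rewrite subn0 ffactn0 mulr1n.
rewrite derivnS IH derivMn ffactnSr; case def_m: (n - i)%N => [|m].
  by rewrite A0 derivC mul0rn muln0 mulr0n.
by rewrite AS -mulrnA subnS def_m mulnC.
Qed.

Definition appell_coef k : {poly R} := (k`!%:R)^-1 *: A k.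

Lemma appell_coef0 : appell_coef 0 = 1.
Proof. by case: A_appell => A0 _; rewrite /appell_coef A0 fact0 invr1 scale1r. Qed.

Lemma deriv_appell_coef k : (appell_coef k.+1)^`() = appell_coef k.
Proof.
case: A_appell => _ AS; rewrite /appell_coef derivZ AS -scaler_nat scalerA factS natrM.
by rewrite invfM mulrAC mulVf ?mul1r ?char0_natf_neq0.
Qed.

Lemma appellE n : A n = n`!%:R *: appell_coef n.
Proof. by rewrite /appell_coef scalerA mulfV ?scale1r ?char0_fact_neq0. Qed.

Lemma derivn_appellE n i :
  (A n)^`(i) = if (i <= n)%N then n`!%:R *: appell_coef (n - i) else 0.
Proof.
rewrite derivn_appell; case: leqP => [le_in | lt_ni]; last by rewrite ffact_small.
by rewrite appellE -scaler_nat scalerA -natrM ffact_fact.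
Qed.

End Appell.

Section SeriesInverse.
Variable S : comPzRingType.
Implicit Types h e : nat -> S.

Definition conv h e n : S := \sum_(t < n.+1) h t * e (n - t)%N.

Lemma convN h e n : conv h (fun k => - e k) n = - conv h e n.
Proof. by rewrite /conv -sumrN; apply: eq_bigr => t _; rewrite mulrN. Qed.

(* Coefficients of the inverse power series; the recursion does not divide by [h 0],
   so it is only meaningful when [h 0 = 1]. *)
Fixpoint series_inv_seq h n : seq S :=
  if n is n'.+1 then
    let s := series_inv_seq h n' in rcons s (- \sum_(t < n'.+1) h t.+1 * nth 0 s (n' - t))
  else [:: 1].

Definition series_inv h n : S := nth 0 (series_inv_seq h n) n.

Lemma size_series_inv_seq h n : size (series_inv_seq h n) = n.+1.
Proof. by elim: n => //= n IH; rewrite size_rcons IH. Qed.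

Lemma nth_series_inv_seq h n i : (i <= n)%N -> nth 0 (series_inv_seq h n) i = series_inv h i.
Proof.
elim: n => [|n IH]; first by rewrite leqn0 => /eqP ->.
rewrite leq_eqVlt => /predU1P[-> // | lt_in].
by rewrite /= nth_rcons size_series_inv_seq lt_in IH.
Qed.

Lemma series_inv0 h : series_inv h 0 = 1.
Proof. by []. Qed.

Lemma series_invS h n :
  series_inv h n.+1 = - \sum_(t < n.+1) h t.+1 * series_inv h (n - t).
Proof.
rewrite /series_inv /= nth_rcons size_series_inv_seq ltnn eqxx.
by congr (- _); apply: eq_bigr => t _; rewrite nth_series_inv_seq ?leq_subr.
Qed.

Lemma conv_series_inv h n : h 0%N = 1 -> conv h (series_inv h) n = (n == 0)%:R.
Proof.
move=> h0; rewrite /conv big_ord_recl h0 mul1r subn0.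
case: n => [|n]; first by rewrite big_ord0 addr0.
rewrite series_invS addrC /= mulr0n; apply/eqP; rewrite subr_eq0; apply/eqP/eq_bigr => t _.
by rewrite /bump /= add1n subSS.
Qed.

Lemma series_inv_unique h e :
  h 0%N = 1 -> (forall n, conv h e n = (n == 0)%:R) -> series_inv h =1 e.
Proof.
move=> h0 conv_he; elim/ltn_ind => -[_ | n IH].
  by have := conv_he 0%N; rewrite /conv big_ord1 h0 mul1r.
have /eqP := conv_he n.+1; rewrite /conv big_ord_recl h0 mul1r subn0 addr_eq0 => /eqP ->.
rewrite series_invS; congr (- _); apply: eq_bigr => t _.
by rewrite IH /bump /= ?add1n ?subSS // ltnS leq_subr.
Qed.

End SeriesInverse.

Section DerivConv.
Variable R : fieldType.
Implicit Types h e : nat -> {poly R}.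

Lemma deriv_conv h e n :
  (forall k, (h k.+1)^`() = h k) -> (h 0%N)^`() = 0 -> (e 0%N)^`() = 0 ->
  (conv h e n.+1)^`() = conv h e n + conv h (fun k => (e k.+1)^`()) n.
Proof.
move=> dh dh0 de0; rewrite /conv raddf_sum /=.
under eq_bigr do rewrite derivM.
rewrite big_split /= big_ord_recl dh0 mul0r add0r.
rewrite [X in _ + X]big_ord_recr /= subnn de0 mulr0 addr0.
congr (_ + _); apply: eq_bigr => t _; first by rewrite dh /bump /= add1n subSS.
by rewrite subSn // -ltnS.
Qed.

End DerivConv.

Section DualAppell.
Variable R : fieldType.
Hypothesis R_char0 : [pchar R] =i pred0.
Variable A : nat -> {poly R}.
Hypothesis A_appell : is_appell A.

Local Notation h := (appell_coef A).
Local Notation hbar := (series_inv h).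

Lemma deriv_series_inv_appell n : (hbar n.+1)^`() = - hbar n.
Proof.
have h0 := appell_coef0 A_appell; have dh := deriv_appell_coef R_char0 A_appell.
suff hbarE : series_inv h =1 (fun k => - (hbar k.+1)^`()) by rewrite [hbar n]hbarE opprK.
apply: series_inv_unique => // k; rewrite convN; apply/eqP.
rewrite eq_sym -subr_eq0 opprK -(conv_series_inv k h0) -deriv_conv ?h0 ?deriv1 //.
by rewrite conv_series_inv //= mulr0n deriv0.
Qed.

(* The Appell sequence with generating function [e^{xt} / f_A(-t)]. *)
Definition dual_appell n : {poly R} := (n`!%:R * (-1) ^+ n) *: hbar n.

Lemma dual_appell_appell : is_appell dual_appell.
Proof.
split=> [|n]; first by rewrite /dual_appell series_inv0 fact0 expr0 mulr1 scale1r.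
rewrite /dual_appell derivZ deriv_series_inv_appell scalerN -scaleNr -scaler_nat scalerA.
by congr (_ *: _); rewrite factS natrM exprS; ring.
Qed.

Lemma derivn_dual_appellE n i : (dual_appell n)^`(i) =
  if (i <= n)%N then (n`!%:R * (-1) ^+ (n - i)) *: hbar (n - i) else 0.
Proof.
rewrite (derivn_appell dual_appell_appell); case: leqP => [le_in | lt_ni]; last first.
  by rewrite ffact_small.
rewrite /dual_appell -scaler_nat scalerA -(ffact_fact le_in) natrM; congr (_ *: _); ring.
Qed.

End DualAppell.

Section SelfDuality.
Variable R : fieldType.
Hypothesis R_char0 : [pchar R] =i pred0.
Variable A : nat -> {poly R}.
Hypothesis A_appell : is_appell A.

Local Notation h := (appell_coef A).

Definition fA_coef k : R := (A k).[0] / k`!%:R.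

(* The coefficient of [t^n] in [f_A(t) f_A(-t)]. *)
Definition fA_even_coef n : R := conv fA_coef (fun k => (-1) ^+ k * fA_coef k) n.

Lemma fA_coef0 : fA_coef 0 = 1.
Proof. by case: A_appell => A0 _; rewrite /fA_coef A0 hornerC fact0 divr1. Qed.

Lemma fA_even_coef0 : fA_even_coef 0 = 1.
Proof. by rewrite /fA_even_coef /conv big_ord1 fA_coef0 expr0 !mul1r. Qed.

Definition signed_appell_coef k : {poly R} := (-1) ^+ k *: h k.

(* The left-hand side is the [t^n]-coefficient of [e^{xt} f_A(t) e^{-xt} f_A(-t)], which
   does not depend on [x]. *)
Lemma conv_signed_appell_coef n : conv h signed_appell_coef n = (fA_even_coef n)%:P.
Proof.
have h0 := appell_coef0 A_appell; have dh := deriv_appell_coef R_char0 A_appell.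
rewrite (char0_deriv_eq0 R_char0 (p := conv _ _ n)).
  congr _%:P; rewrite /conv horner_sum; apply: eq_bigr => t _.
  by rewrite hornerM /signed_appell_coef !hornerZ /appell_coef /fA_coef; ring.
have dh0 : (h 0)^`() = 0 by rewrite h0 deriv1.
have de0 : (signed_appell_coef 0)^`() = 0 by rewrite /signed_appell_coef expr0 scale1r.
case: n => [|n]; first by rewrite /conv big_ord1 derivM dh0 de0 mul0r mulr0 addr0.
rewrite (deriv_conv n dh dh0 de0).
have -> : conv h (fun k => ((-1) ^+ k.+1 *: h k.+1)^`()) n = - conv h signed_appell_coef n.
  by rewrite -convN; apply: eq_bigr => t _; rewrite derivZ dh exprS mulN1r scaleNr.
by rewrite subrr.
Qed.

Lemma appellE_signed n : A n = (n`!%:R * (-1) ^+ n) *: signed_appell_coef n.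
Proof. by rewrite scalerA -mulrA -expr2 sqrr_sign mulr1 -appellE. Qed.

Lemma dual_appell_eq_iff_conv :
  (forall n, A n = dual_appell A n) <-> (forall n, conv h signed_appell_coef n = (n == 0)%:R).
Proof.
have h0 := appell_coef0 A_appell.
have sign_fact_neq0 n : n`!%:R * (-1) ^+ n != 0 :> R.
  by rewrite mulf_neq0 ?char0_fact_neq0 ?signr_eq0.
split=> [self_dual n | conv_delta n].
  rewrite -(conv_series_inv n h0); apply: eq_bigr => t _; congr (_ * _).
  by apply: (scalerI (sign_fact_neq0 (n - t)%N)); rewrite -appellE_signed self_dual.
by rewrite appellE_signed /dual_appell (series_inv_unique h0 conv_delta).
Qed.

Lemma dual_appell_eq_iff_fA_even :
  (forall n, A n = dual_appell A n) <-> (forall n, (0 < n)%N -> fA_even_coef n = 0).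
Proof.
rewrite dual_appell_eq_iff_conv; split=> [conv_delta [|n] // _ | fA_even [|n]].
- by apply: polyC_inj; rewrite -conv_signed_appell_coef conv_delta.
- by rewrite conv_signed_appell_coef fA_even_coef0.
- by rewrite conv_signed_appell_coef fA_even.
Qed.

End SelfDuality.

Section MonomialSelfDual.
Variable R : fieldType.
Hypothesis R_char0 : [pchar R] =i pred0.

Lemma Xn_appell : is_appell (fun n => 'X^n : {poly R}).
Proof. by split=> [|n]; rewrite ?expr0 // derivXn. Qed.

(* Here [f_A = 1], so [f_A(t) f_A(-t) = 1]. *)
Lemma dual_appell_Xn n : dual_appell (fun n => 'X^n : {poly R}) n = 'X^n.
Proof.
apply/esym; move: n; apply/(dual_appell_eq_iff_fA_even R_char0 Xn_appell) => n n_gt0.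
rewrite /fA_even_coef /conv big1 // => -[[|t] lt_t] _; rewrite /fA_coef !hornerXn !expr0n /=.
  by rewrite subn0 (gtn_eqF n_gt0) mul0r !mulr0.
by rewrite mul0r mul0r.
Qed.

End MonomialSelfDual.

Section Toeplitz.
Variable S : comPzRingType.

Definition toeplitz N (f : nat -> S) : 'M[S]_N :=
  \matrix_(i < N, k < N) (if (i <= k)%N then f (k - i)%N else 0).

Lemma mul_toeplitz N (f g : nat -> S) :
  toeplitz N f *m toeplitz N g = toeplitz N (conv f g).
Proof.
apply/matrixP => i j; rewrite !mxE.
pose F k := (if (i <= k)%N then f (k - i)%N else 0) * (if (k <= j)%N then g (j - k)%N else 0).
rewrite (eq_bigr (F \o val)) => [|k _]; last by rewrite !mxE.
rewrite -(big_mkord xpredT F); case: (leqP i j) => [le_ij | lt_ji]; last first.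
  rewrite big1 // => k _; rewrite /F; case: (leqP i k) => [le_ik | _]; last by rewrite mul0r.
  by rewrite leqNgt (leq_trans lt_ji le_ik) mulr0.
have lt_jN : (j < N)%N := ltn_ord j.
rewrite (big_cat_nat (n := i)) ?(leq_trans le_ij (ltnW _)) //= big1_seq ?add0r; last first.
  by move=> k; rewrite mem_index_iota /F => /andP[_ /andP[_ lt_ki]]; rewrite leqNgt lt_ki mul0r.
rewrite (big_cat_nat (n := j.+1)) ?leqW //= [X in (_ + X)%R]big1_seq ?addr0; last first.
  move=> k; rewrite mem_index_iota /F => /andP[_ /andP[lt_jk _]].
  by rewrite [(k <= j)%N]leqNgt lt_jk mulr0.
rewrite -{1}(add0n i) big_addn subSn // big_mkord; apply: eq_bigr => t _.
have le_tj : (t + i <= j)%N by have := ltn_ord t; lia.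
by rewrite /F leq_addl le_tj addnK subnDA subnAC.
Qed.

Lemma toeplitz_delta N : toeplitz N (fun n => (n == 0)%:R) = 1%:M.
Proof.
apply/matrixP => i k; rewrite !mxE -(inj_eq val_inj); case: leqP => [le_ik | lt_ki].
  by rewrite subn_eq0 eqn_leq le_ik.
by rewrite gtn_eqF.
Qed.

Lemma det_toeplitz N (f : nat -> S) : \det (toeplitz N f) = f 0%N ^+ N.
Proof.
rewrite -det_tr det_trig; last by apply/is_trig_mxP => i k lt_ik; rewrite !mxE leqNgt lt_ik.
by rewrite (eq_bigr (fun=> f 0%N)) ?prodr_const ?card_ord // => i _; rewrite !mxE leqnn subnn.
Qed.

Lemma det_ulsubmx_inverse m n (X Y : 'M[S]_(m + n)) :
  X *m Y = 1%:M -> \det (ulsubmx X) = \det X * \det (drsubmx Y).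
Proof.
move=> XY.
have : block_mx (ulsubmx X) (ursubmx X) (dlsubmx X) (drsubmx X) *m
       block_mx (ulsubmx Y) (ursubmx Y) (dlsubmx Y) (drsubmx Y) = block_mx 1%:M 0 0 1%:M.
  by rewrite !submxK XY scalar_mx_block.
rewrite mulmx_block => /eq_block_mx[_ XY_ur _ XY_dr].
have : X *m block_mx 1%:M (ursubmx Y) 0 (drsubmx Y) = block_mx (ulsubmx X) 0 (dlsubmx X) 1%:M.
  by rewrite -{1}[X]submxK mulmx_block !mulmx1 !mulmx0 !addr0 XY_ur XY_dr.
move/(congr1 determinant); rewrite det_mulmx det_ublock det_lblock !det1 mul1r mulr1.
by move<-.
Qed.

Lemma det_scaled_mxsub k (N : 'M[S]_k) (p q : 'I_k -> 'I_k) (a b : 'I_k -> S) :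
  \det (\matrix_(i, j) (a i * b j * N (p i) (q j))) =
  (\prod_i a i) * (\prod_j b j) * \det (rowsub p (1%:M : 'M[S]_k)) *
  \det (colsub q (1%:M : 'M[S]_k)) * \det N.
Proof.
have -> : \matrix_(i, j) (a i * b j * N (p i) (q j)) =
    diag_mx (\row_i a i) *m (rowsub p 1%:M *m (N *m colsub q 1%:M)) *m diag_mx (\row_j b j).
  rewrite mulmx_colsub mulmx1 -rowsubE -mxsubrc mul_diag_mx mul_mx_diag.
  by apply/matrixP => i j; rewrite !mxE; ring.
rewrite !det_mulmx !det_diag.
under [\prod_i (\row_i a i) 0 i]eq_bigr do rewrite mxE.
under [\prod_i (\row_i b i) 0 i]eq_bigr do rewrite mxE.
ring.
Qed.

End Toeplitz.

Lemma det_mxsub1_polyC (R : comNzRingType) k (f g : 'I_k -> 'I_k) :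
  \det (mxsub f g (1%:M : 'M[{poly R}]_k)) = (\det (mxsub f g (1%:M : 'M[R]_k)))%:P.
Proof.
rewrite -det_map_mx; congr (\det _); apply/matrixP => i j.
by rewrite !mxE rmorph_nat.
Qed.

Definition wronskian_mx (R : fieldType) r (F : 'I_r -> {poly R}) : 'M[{poly R}]_r :=
  \matrix_(i < r, j < r) (F j)^`(i).

Lemma wronskianE (R : fieldType) r (F : 'I_r -> {poly R}) : wronskian F = \det (wronskian_mx F).
Proof. by []. Qed.

Lemma part_degs_conj_part l (a : 'I_(head 0%N l)) :
  part_degs (conj_part l) (rev_ord a) = (col_length l a + (head 0%N l - a.+1))%N.
Proof.
have lt_a := ltn_ord a; rewrite /part_degs /conj_part size_mkseq /= nth_mkseq; last lia.
by have -> : (head 0%N l - (head 0%N l - a.+1).+1 = a)%N by lia.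
Qed.

Section WronskianDuality.
Variable R : fieldType.
Hypothesis R_char0 : [pchar R] =i pred0.
Variable l : seq nat.
Hypothesis l_sorted : sorted geq l.
Local Notation r := (size l).
Local Notation s := (head 0%N l).

Definition degs_perm_ord (k : 'I_(r + s)) : 'I_(r + s) := insubd k (degs_perm l k).

Lemma degs_perm_ordE k : val (degs_perm_ord k) = degs_perm l k.
Proof. by rewrite val_insubd degs_perm_lt. Qed.

Lemma degs_perm_ord_inj : injective degs_perm_ord.
Proof.
move=> k k' /(congr1 val); rewrite !degs_perm_ordE => /degs_perm_inj eq_kk'.
by apply/val_inj/eq_kk'.
Qed.

Definition appell_toeplitz (A : nat -> {poly R}) :=
  colsub degs_perm_ord (toeplitz (r + s) (appell_coef A)).

Definition dual_toeplitz (A : nat -> {poly R}) :=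
  rowsub degs_perm_ord (toeplitz (r + s) (series_inv (appell_coef A))).

Section FixedAppell.
Variable A : nat -> {poly R}.
Hypothesis A_appell : is_appell A.

Lemma mul_appell_dual_toeplitz : appell_toeplitz A *m dual_toeplitz A = 1%:M.
Proof.
have -> : 1%:M = toeplitz (r + s) (conv (appell_coef A) (series_inv (appell_coef A))).
  rewrite -toeplitz_delta; apply/matrixP => i j.
  by rewrite !mxE conv_series_inv ?(appell_coef0 A_appell).
rewrite -mul_toeplitz.
apply/matrixP => i j; rewrite !mxE [RHS](reindex_inj degs_perm_ord_inj).
by apply: eq_bigr => k _; rewrite !mxE.
Qed.

Lemma det_appell_toeplitz :
  \det (appell_toeplitz A) = (\det (colsub degs_perm_ord (1%:M : 'M[R]_(r + s))))%:P.
Proof.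
rewrite /appell_toeplitz -[X in colsub _ X]mulmx1 -mulmx_colsub det_mulmx det_toeplitz.
by rewrite (appell_coef0 A_appell) expr1n mul1r det_mxsub1_polyC.
Qed.

Lemma wronskian_part_ulsubmx :
  wronskian (fun j : 'I_r => A (part_degs l j)) =
  (\prod_(j < r) ((part_degs l j)`!%:R : R))%:P * \det (ulsubmx (appell_toeplitz A)).
Proof.
rewrite wronskianE.
have -> : wronskian_mx (fun j : 'I_r => A (part_degs l j)) =
    ulsubmx (appell_toeplitz A) *m diag_mx (\row_(j < r) ((part_degs l j)`!%:R : R)%:P).
  rewrite mul_mx_diag; apply/matrixP => i j.
  rewrite !mxE degs_perm_ordE /degs_perm /= ltn_ord derivn_appellE //.
  by case: leqP => _; rewrite ?mul0r // mulrC mul_polyC.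
rewrite det_mulmx det_diag mulrC rmorph_prod; congr (_ * _).
by apply: eq_bigr => j _; rewrite mxE.
Qed.

Definition dual_row_factor (a : 'I_s) : R :=
  ((col_length l a + (s - a.+1))`!%:R)^-1 * (-1) ^+ comp_degs l a.

Lemma drsubmx_dual_toeplitzE (a b : 'I_s) :
  drsubmx (dual_toeplitz A) a b =
  (dual_row_factor a * (-1) ^+ (r + b))%:P *
  (wronskian_mx (fun j : 'I_s => dual_appell A (part_degs (conj_part l) j)))^T
    (rev_ord a) (rev_ord b).
Proof.
rewrite !mxE degs_perm_ordE /degs_perm /= ltnNge leq_addr /= addKn.
rewrite derivn_dual_appellE // part_degs_conj_part /=.
have := col_length_le_size l a; have := ltn_ord a; have := ltn_ord b.
set N := (col_length l a + (s - a.+1))%N => lt_bs lt_as le_col_r.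
have -> : (comp_degs l a <= r + b)%N = (s - b.+1 <= N)%N.
  by apply/idP/idP; rewrite /N /comp_degs; lia.
case: ifP => // le_N; last by rewrite mulr0.
have -> : (r + b - comp_degs l a = N - (s - b.+1))%N by rewrite /N /comp_degs; lia.
rewrite mul_polyC scalerA; set t := (N - (s - b.+1))%N.
have <- : (comp_degs l a + t = r + b)%N by rewrite /t /N /comp_degs; lia.
rewrite -[LHS]scale1r /dual_row_factor; congr (_ *: _).
have sign_cancel (F : R) c k : F != 0 -> 1 = F^-1 * (-1) ^+ c * (-1) ^+ (c + k) * (F * (-1) ^+ k).
  by move=> F0; rewrite -[LHS](sqrr_sign R (c + k)) !exprD; field.
exact/sign_cancel/char0_fact_neq0.
Qed.

End FixedAppell.

Lemma wronskian_part_dual_conj : exists c : R, forall A, is_appell A ->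
  wronskian (fun j : 'I_r => A (part_degs l j)) =
  c%:P * wronskian (fun j : 'I_s => dual_appell A (part_degs (conj_part l) j)).
Proof.
exists ((\prod_(j < r) ((part_degs l j)`!%:R : R)) * \det (colsub degs_perm_ord 1%:M) *
  ((\prod_a dual_row_factor a) * (\prod_(b < s) (-1) ^+ (r + b)) *
   \det (rowsub (@rev_ord s) 1%:M) * \det (colsub (@rev_ord s) 1%:M))).
move=> A A_appell.
set W := wronskian_mx (fun j : 'I_s => dual_appell A (part_degs (conj_part l) j)).
rewrite wronskian_part_ulsubmx // (det_ulsubmx_inverse (mul_appell_dual_toeplitz A_appell)).
have -> : drsubmx (dual_toeplitz A) = \matrix_(a, b)
    ((dual_row_factor a)%:P * ((-1) ^+ (r + b))%:P * W^T (rev_ord a) (rev_ord b)).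
  by apply/matrixP => a b; rewrite drsubmx_dual_toeplitzE // !mxE polyCM.
rewrite (det_appell_toeplitz A_appell) det_scaled_mxsub det_tr -wronskianE !det_mxsub1_polyC.
by rewrite -!rmorph_prod !polyCM; ring.
Qed.

End WronskianDuality.

Section MonomialWronskian.
Variable R : fieldType.

Definition ffact_poly (i : nat) : {poly R} := \prod_(t <- iota 0 i) ('X - (t%:R)%:P).

Lemma size_ffact_poly i : size (ffact_poly i) = i.+1.
Proof. by rewrite size_prod_XsubC size_iota. Qed.

Lemma horner_ffact_poly n i : (ffact_poly i).[n%:R] = (n ^_ i)%:R.
Proof.
rewrite /ffact_poly horner_prod; elim: i => [|i IH]; first by rewrite big_nil ffactn0.
rewrite -addn1 iotaD big_cat /= big_seq1 IH hornerXsubC add0n addn1 ffactnSr natrM.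
by case: (leqP i n) => [le_in | lt_ni]; [rewrite natrB | rewrite ffact_small // !mul0r].
Qed.

Lemma det_ffact k (n : 'I_k -> nat) :
  \det (\matrix_(i < k, j < k) ((n j) ^_ i)%:R : 'M[R]_k) =
  \prod_(i < k) \prod_(j < k | (i < j)%N) ((n j)%:R - (n i)%:R).
Proof.
pose L : 'M[R]_k := \matrix_(i, m) (ffact_poly i)`_m.
have -> : \matrix_(i < k, j < k) ((n j) ^_ i)%:R = L *m Vandermonde k (\row_j (n j)%:R).
  apply/matrixP => i j; rewrite !mxE -horner_ffact_poly (horner_coef_wide (n := k)).
    by apply: eq_bigr => m _; rewrite !mxE.
  by rewrite size_ffact_poly.
rewrite det_mulmx det_Vandermonde det_trig; last first.
  by apply/is_trig_mxP => i m lt_im; rewrite mxE nth_default // size_ffact_poly.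
rewrite big1 ?mul1r => [|i _]; last first.
  have := lead_coef_prod_XsubC (iota 0 i) xpredT (fun t : nat => (t%:R : R)).
  by rewrite mxE /lead_coef size_prod_XsubC size_iota.
by apply: eq_bigr => i _; apply: eq_bigr => j _; rewrite !mxE.
Qed.

Lemma lead_coef_wronskian_Xn k (n : 'I_k -> nat) :
  lead_coef (wronskian (fun j => 'X^(n j) : {poly R})) = vandermonde (fun j => (n j)%:R : R).
Proof.
pose F : 'M[R]_k := \matrix_(i < k, j < k) ((n j) ^_ i)%:R.
have : diag_mx (\row_(i < k) 'X^i) *m wronskian_mx (fun j => 'X^(n j)) =
    map_mx polyC F *m diag_mx (\row_(j < k) 'X^(n j)).
  rewrite mul_diag_mx mul_mx_diag; apply/matrixP => i j; rewrite !mxE derivnXn.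
  case: (leqP i (n j)) => [le_i | lt_i]; last by rewrite ffact_small // !mulr0n mulr0 mul0r.
  by rewrite mulrnAr -exprD subnKC // polyC_natr mulr_natl.
move/(congr1 (lead_coef \o determinant)); rewrite /= !det_mulmx !det_diag det_map_mx.
have monic_prodX (m : 'I_k -> nat) : \prod_i (\row_i 'X^(m i) : 'rV[{poly R}]_k) 0 i \is monic.
  by apply: monic_prod => i _; rewrite mxE monicXn.
rewrite lead_coef_monicM ?monic_prodX // lead_coef_Mmonic ?monic_prodX //.
by rewrite lead_coefC det_ffact wronskianE.
Qed.

End MonomialWronskian.

Lemma eq_wronskian (R : fieldType) r (F G : 'I_r -> {poly R}) :
  F =1 G -> wronskian F = wronskian G.
Proof.
by move=> eqFG; rewrite /wronskian; congr (\det _); apply/matrixP => i j; rewrite !mxE eqFG.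
Qed.

Lemma eq_A_part (R : fieldType) (A B : nat -> {poly R}) l : A =1 B -> A_part A l = A_part B l.
Proof. by move=> eqAB; rewrite /A_part (eq_wronskian (fun i => eqAB _)). Qed.

Lemma A_partE (R : fieldType) (A : nat -> {poly R}) l s (size_l : size l = s) :
  A_part A l = (vandermonde (fun i : 'I_s => (part_degs l i)%:R : R))^-1 *:
                 wronskian (fun i : 'I_s => A (part_degs l i)).
Proof. by case: s / size_l. Qed.

Lemma is_partition_nseq1 n : is_partition (nseq n 1%N).
Proof. by rewrite /is_partition all_nseq orbT andbT; elim: n => // -[]. Qed.

Lemma is_partition1 n : (0 < n)%N -> is_partition [:: n].
Proof. by rewrite /is_partition /= andbT. Qed.

Lemma conj_part_nseq1 n : conj_part (nseq n.+1 1%N) = [:: n.+1].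
Proof. by rewrite /conj_part /mkseq /= count_nseq mul1n. Qed.

Lemma conj_part1 n : conj_part [:: n] = nseq n 1%N.
Proof.
apply: (@eq_from_nth _ 0%N); first by rewrite size_mkseq size_nseq.
by move=> i; rewrite size_mkseq => lt_in; rewrite nth_mkseq // nth_nseq /= lt_in.
Qed.

Lemma A_part_nil (R : fieldType) (A : nat -> {poly R}) : A_part A [::] = 1.
Proof. by rewrite /A_part /wronskian /vandermonde det_mx00 big_ord0 invr1 scale1r. Qed.

Lemma A_part1 (R : fieldType) (A : nat -> {poly R}) n : A_part A [:: n] = A n.
Proof.
rewrite /A_part /wronskian /vandermonde det_mx11 big_ord1 big_pred0 => [|[[|]]] //.
by rewrite invr1 scale1r mxE /part_degs /= addn0.
Qed.

Section PartitionDuality.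
Variable R : fieldType.
Hypothesis R_char0 : [pchar R] =i pred0.

Lemma vandermonde_part_degs_neq0 l :
  sorted geq l -> vandermonde (fun i : 'I_(size l) => (part_degs l i)%:R : R) != 0.
Proof.
move=> l_sorted; apply/prodf_neq0 => i _; apply/prodf_neq0 => j lt_ij.
rewrite -natrB; last exact/ltnW/part_degs_incr.
by rewrite char0_natf_neq0 // subn_gt0 part_degs_incr.
Qed.

Lemma A_part_dual_conj (A : nat -> {poly R}) l : is_appell A -> is_partition l ->
  A_part A l = A_part (dual_appell A) (conj_part l).
Proof.
move=> A_appell /andP[l_sorted _].
have [c Wc] := wronskian_part_dual_conj R_char0 l_sorted.
have := Wc _ (Xn_appell R); rewrite (eq_wronskian (fun j => dual_appell_Xn R_char0 _)).
move/(congr1 lead_coef); rewrite lead_coefM lead_coefC !lead_coef_wronskian_Xn => Vc.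
rewrite (A_partE (dual_appell A) (size_mkseq _ _)) /A_part (Wc A A_appell) mul_polyC scalerA.
have := vandermonde_part_degs_neq0 l_sorted; rewrite Vc mulf_eq0 negb_or => /andP[c0 V0].
by rewrite invfM mulrAC mulVf ?mul1r.
Qed.

Lemma A_dual_dual_appell (A : nat -> {poly R}) n : is_appell A -> A_dual A n = dual_appell A n.
Proof.
move=> A_appell; case: n => [|n].
  by rewrite /A_dual A_part_nil; case: (dual_appell_appell R_char0 A_appell).
by rewrite /A_dual A_part_dual_conj ?is_partition_nseq1 // conj_part_nseq1 A_part1.
Qed.

End PartitionDuality.

Section CongruenceModXn.
Variable R : comNzRingType.
Implicit Types p q : {poly R}.

Definition eqmodXn n p q := exists r, p - q = r * 'X^n.

Lemma eqmodXnP n p q : eqmodXn n p q <-> (forall i, (i < n)%N -> p`_i = q`_i).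
Proof.
split=> [[r pq] i lt_in | eq_pq]; first by apply/eqP; rewrite -subr_eq0 -coefB pq coefMXn lt_in.
exists (\poly_(i < size (p - q)) (p - q)`_(i + n)); apply/polyP => i.
rewrite coefMXn; case: ltnP => [lt_in | le_ni]; first by rewrite coefB eq_pq ?subrr.
rewrite coef_poly subnK //; case: ltnP => // le_pi.
by rewrite nth_default // (leq_trans le_pi) ?leq_subr.
Qed.

Lemma eqmodXn_refl n p : eqmodXn n p p.
Proof. by exists 0; rewrite subrr mul0r. Qed.

Lemma eqmodXn_sym n p q : eqmodXn n p q -> eqmodXn n q p.
Proof. by case=> r pq; exists (- r); rewrite mulNr -pq opprB. Qed.

Lemma eqmodXn_trans n p q s : eqmodXn n p q -> eqmodXn n q s -> eqmodXn n p s.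
Proof. by case=> r1 pq [r2 qs]; exists (r1 + r2); rewrite mulrDl -pq -qs addrA subrK. Qed.

Lemma eqmodXn_le m n p q : (m <= n)%N -> eqmodXn n p q -> eqmodXn m p q.
Proof.
by move=> le_mn /eqmodXnP eq_pq; apply/eqmodXnP => i lt_im; rewrite eq_pq ?(leq_trans lt_im).
Qed.

Lemma eqmodXnD n p1 q1 p2 q2 :
  eqmodXn n p1 q1 -> eqmodXn n p2 q2 -> eqmodXn n (p1 + p2) (q1 + q2).
Proof. by case=> r1 pq1 [r2 pq2]; exists (r1 + r2); rewrite mulrDl -pq1 -pq2; ring. Qed.

Lemma eqmodXnN n p q : eqmodXn n p q -> eqmodXn n (- p) (- q).
Proof. by case=> r pq; exists (- r); rewrite mulNr -pq; ring. Qed.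

Lemma eqmodXnM n p1 q1 p2 q2 :
  eqmodXn n p1 q1 -> eqmodXn n p2 q2 -> eqmodXn n (p1 * p2) (q1 * q2).
Proof.
case=> r1 pq1 [r2 pq2]; exists (r1 * p2 + q1 * r2).
have -> : p1 * p2 - q1 * q2 = (p1 - q1) * p2 + q1 * (p2 - q2) by ring.
by rewrite pq1 pq2; ring.
Qed.

Lemma eqmodXnX n p q m : eqmodXn n p q -> eqmodXn n (p ^+ m) (q ^+ m).
Proof.
move=> pq; elim: m => [|m IH]; first exact: eqmodXn_refl.
by rewrite !exprS; apply: eqmodXnM.
Qed.

Lemma eqmodXn_deriv n p q : eqmodXn n.+1 p q -> eqmodXn n p^`() q^`().
Proof.
case=> r pq; exists (r^`() * 'X + r *+ n.+1).
by rewrite -derivB pq derivM derivXn /= exprS; ring.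
Qed.

Lemma eqmodXn_compN n p q : eqmodXn n p q -> eqmodXn n (p \Po - 'X) (q \Po - 'X).
Proof.
case=> r pq; exists ((r \Po - 'X) * (-1) ^+ n).
by rewrite -comp_polyB pq comp_polyM comp_Xn_poly (exprNn 'X) mulrA.
Qed.

Lemma coef_compN p i : (p \Po - 'X)`_i = (-1) ^+ i * p`_i.
Proof.
have -> : p \Po - 'X = \poly_(k < size p) ((-1) ^+ k * p`_k).
  rewrite comp_polyE poly_def; apply: eq_bigr => k _.
  by rewrite (exprNn 'X) -polyC1 -polyCN -polyC_exp mul_polyC scalerA mulrC.
by rewrite coef_poly; case: ltnP => // le_pi; rewrite nth_default ?mulr0.
Qed.

Lemma coef_sub_compN p i : (p - (p \Po - 'X))`_i = (1 - (-1) ^+ i) * p`_i.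
Proof. by rewrite coefB coef_compN; ring. Qed.

End CongruenceModXn.

Section TruncatedLog.
Variable R : fieldType.
Hypothesis R_char0 : [pchar R] =i pred0.

Definition log1p_trunc M (u : {poly R}) : {poly R} :=
  \sum_(1 <= m < M.+1) (((-1) ^+ m.+1 / m%:R) *: u ^+ m).

Lemma deriv_log1p_trunc M u : (1 + u) * (log1p_trunc M u)^`() = u^`() * (1 - (- u) ^+ M).
Proof.
elim: M => [|M IH]; first by rewrite /log1p_trunc big_geq // deriv0 mulr0 expr0 subrr mulr0.
rewrite /log1p_trunc big_nat_recr //= -/(log1p_trunc M u) derivD derivZ deriv_exp /=.
rewrite -scaler_nat scalerA mulrDr IH.
have -> : (-1) ^+ M.+2 / M.+1%:R * M.+1%:R = (-1) ^+ M :> R.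
  by rewrite mulfVK ?char0_natf_neq0 // !exprS !mulN1r opprK.
rewrite -mul_polyC polyC_exp polyCN !(exprNn u) exprS.
set c := (-1) ^+ M; set v := u ^+ M.
have -> : u ^+ M.+1 = u * v by rewrite exprS.
ring.
Qed.

End TruncatedLog.

Section Cumulants.
Variable R : fieldType.
Hypothesis R_char0 : [pchar R] =i pred0.
Variable A : nat -> {poly R}.
Hypothesis A_appell : is_appell A.

Local Notation F M := (fA_trunc A M).
Local Notation G M := (F M * (F M \Po - 'X)).
Local Notation L M := (log1p_trunc M (F M - 1))^`().

Lemma coef_fA_trunc M i : (F M)`_i = if (i <= M)%N then fA_coef A i else 0.
Proof. by rewrite coef_poly ltnS. Qed.

Lemma fA_trunc_sub1 M m : eqmodXn m ((F M - 1) ^+ m) 0.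
Proof.
have [r] : eqmodXn 1 (F M - 1) 0.
  by apply/eqmodXnP => -[] // _; rewrite coefB coef_fA_trunc coef1 coef0 (fA_coef0 A_appell) subrr.
by rewrite subr0 => ->; exists (r ^+ m); rewrite subr0 exprMn expr1.
Qed.

Lemma coef_log1p_fA_trunc k M :
  (k <= M)%N -> (log1p_trunc M (F M - 1))`_k = (log1p_trunc k (F k - 1))`_k.
Proof.
move=> le_kM; rewrite /log1p_trunc (big_cat_nat (n := k.+1)) //= coefD.
have -> : (\sum_(k.+1 <= m < M.+1) ((-1) ^+ m.+1 / m%:R) *: (F M - 1) ^+ m)`_k = 0.
  rewrite coef_sum big1_seq // => m /andP[_]; rewrite mem_index_iota => /andP[lt_km _].
  by rewrite coefZ ((eqmodXnP _ _ _).1 (fA_trunc_sub1 M m)) ?coef0 ?mulr0.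
rewrite addr0 !coef_sum; apply: eq_bigr => m _; rewrite !coefZ; congr (_ * _).
apply: (eqmodXnP k.+1 _ _).1 => //; apply/eqmodXnX/eqmodXnP => i le_ik.
by rewrite !coefB !coef_fA_trunc [(i <= k)%N]le_ik (leq_trans (le_ik : (i <= k)%N) le_kM).
Qed.

Lemma appell_cE k M : (k <= M)%N -> appell_c A k = k`!%:R * (log1p_trunc M (F M - 1))`_k.
Proof. by move=> le_kM; rewrite coef_log1p_fA_trunc. Qed.

Lemma fA_trunc_log_deriv M : eqmodXn M (F M * L M) (F M)^`().
Proof.
set u : {poly R} := F M - 1; have -> : F M = 1 + u by rewrite addrC subrK.
rewrite (deriv_log1p_trunc R_char0) [(1 + u)^`()]derivD deriv1 add0r -[X in eqmodXn _ _ X]mulr1.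
apply: eqmodXnM (eqmodXn_refl _ _) _.
rewrite -[X in eqmodXn _ _ X]subr0 exprNn; apply: eqmodXnD (eqmodXn_refl _ _) (eqmodXnN _).
by rewrite -(mulr0 ((-1) ^+ M)); apply: eqmodXnM (eqmodXn_refl _ _) (fA_trunc_sub1 M M).
Qed.

Lemma deriv_fA_even M : eqmodXn M (G M)^`() (G M * (L M - (L M \Po - 'X))).
Proof.
rewrite derivM deriv_comp derivN derivX.
have FL := eqmodXn_sym (fA_trunc_log_deriv M).
apply: (@eqmodXn_trans _ _ _ (F M * L M * (F M \Po - 'X) + F M * ((F M * L M \Po - 'X) * -1))).
  apply: eqmodXnD (eqmodXnM FL (eqmodXn_refl _ _)) _.
  exact: eqmodXnM (eqmodXn_refl _ _) (eqmodXnM (eqmodXn_compN FL) (eqmodXn_refl _ _)).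
rewrite comp_polyM; set P := F M \Po - 'X; set Q := L M \Po - 'X.
suff -> : F M * L M * P + F M * (P * Q * -1) = F M * P * (L M - Q) by exact: eqmodXn_refl.
ring.
Qed.

Lemma coef_fA_even M n : (n <= M)%N -> (G M)`_n = fA_even_coef A n.
Proof.
move=> le_nM; rewrite coefM; apply: eq_bigr => j _; have le_jn : (j <= n)%N by rewrite -ltnS.
by rewrite coef_compN !coef_fA_trunc (leq_trans le_jn le_nM) (leq_trans (leq_subr _ _) le_nM).
Qed.

Lemma appell_c_even_eq0 k : (0 < k)%N -> ~~ odd k ->
  (forall n, (0 < n)%N -> fA_even_coef A n = 0) -> appell_c A k = 0.
Proof.
move=> k_gt0 k_even fA_even.
have G1 : eqmodXn k.+1 (G k) 1.
  apply/eqmodXnP => -[_ | i lt_ik]; rewrite coef_fA_even ?coef1 //=.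
    exact: fA_even_coef0.
  exact: fA_even.
have GD0 : eqmodXn k (G k * (L k - (L k \Po - 'X))) 0.
  by apply: eqmodXn_trans (eqmodXn_sym (deriv_fA_even k)) _; rewrite -deriv1; apply: eqmodXn_deriv.
have D0 : eqmodXn k (L k - (L k \Po - 'X)) 0.
  apply: eqmodXn_trans GD0; rewrite -[X in eqmodXn _ X _]mul1r.
  exact: eqmodXnM (eqmodXn_sym (eqmodXn_le (leqnSn k) G1)) (eqmodXn_refl _ _).
have odd_k1 : odd k.-1 by rewrite -(prednK k_gt0) /= negbK in k_even.
have := (eqmodXnP _ _ _).1 D0 k.-1; rewrite ltn_predL k_gt0 => /(_ isT).
rewrite coef_sub_compN coef0 coef_deriv -signr_odd odd_k1 prednK //= => /eqP.
have two_neq0 : 1 - (-1) != 0 :> R by rewrite opprK (char0_natf_neq0 R_char0 (n := 2)).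
rewrite mulf_eq0 (negbTE two_neq0) -mulr_natr mulf_eq0 (negbTE (char0_natf_neq0 R_char0 k_gt0)).
by rewrite orbF => /eqP log_k0; rewrite (appell_cE (leqnn k)) log_k0 mulr0.
Qed.

Lemma fA_even_coef_eq0 n : (0 < n)%N ->
  (forall k, (0 < k)%N -> ~~ odd k -> appell_c A k = 0) -> fA_even_coef A n = 0.
Proof.
move=> n_gt0 c_even.
have D0 : eqmodXn n (L n - (L n \Po - 'X)) 0.
  apply/eqmodXnP => j lt_jn; rewrite coef_sub_compN coef0 coef_deriv -signr_odd.
  case odd_j: (odd j); last by rewrite expr0 subrr mul0r.
  have := c_even j.+1 isT; rewrite /= odd_j (appell_cE lt_jn) => /(_ isT) /eqP.
  by rewrite mulf_eq0 (negbTE (char0_fact_neq0 R_char0 _)) => /eqP ->; rewrite mul0rn mulr0.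
have G'0 : eqmodXn n (G n)^`() 0.
  apply: eqmodXn_trans (deriv_fA_even n) _; rewrite -(mulr0 (G n)).
  exact: eqmodXnM (eqmodXn_refl _ _) D0.
have := (eqmodXnP _ _ _).1 G'0 n.-1; rewrite ltn_predL n_gt0 => /(_ isT).
rewrite coef0 coef_deriv prednK // coef_fA_even // => /eqP.
by rewrite -mulr_natr mulf_eq0 (negbTE (char0_natf_neq0 R_char0 n_gt0)) orbF => /eqP.
Qed.

Lemma fA_even_coef_eq0P : (forall n, (0 < n)%N -> fA_even_coef A n = 0) <->
  (forall n, (0 < n)%N -> ~~ odd n -> appell_c A n = 0).
Proof.
split=> H n n_gt0; first by move=> n_even; apply: appell_c_even_eq0.
exact: fA_even_coef_eq0.
Qed.

End Cumulants.

Section Corollary.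
Variable R : fieldType.
Hypothesis R_char0 : [pchar R] =i pred0.
Variable A : nat -> {poly R}.
Hypothesis A_appell : is_appell A.

Lemma self_dual_iff_conj_invariant :
  (forall n, A n = A_dual A n) <->
  (forall l, is_partition l -> A_part A l = A_part A (conj_part l)).
Proof.
split=> [self_dual l l_part | conj_inv [|n]].
- rewrite (A_part_dual_conj R_char0 A_appell l_part); apply: eq_A_part => n.
  by rewrite self_dual A_dual_dual_appell.
- by rewrite /A_dual A_part_nil; case: A_appell.
- by have := conj_inv _ (is_partition1 (ltn0Sn n)); rewrite A_part1 conj_part1.
Qed.

Lemma self_dual_iff_even_cumulants :
  (forall n, A n = A_dual A n) <-> (forall n, (0 < n)%N -> ~~ odd n -> appell_c A n = 0).
Proof.
rewrite -(fA_even_coef_eq0P R_char0 A_appell) -(dual_appell_eq_iff_fA_even R_char0 A_appell).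
by split=> self_dual n; rewrite self_dual A_dual_dual_appell.
Qed.

End Corollary.

Theorem corollary5p7 (R : fieldType) (hR : [pchar R] =i pred0)
    (A : nat -> {poly R}) (hA : is_appell A) :
  ((forall n : nat, A n = A_dual A n) <->
   (forall l : seq nat, is_partition l -> A_part A l = A_part A (conj_part l)))
  /\
  ((forall l : seq nat, is_partition l -> A_part A l = A_part A (conj_part l)) <->
   (forall n : nat, (0 < n)%N -> ~~ odd n -> appell_c A n = 0)).
Proof.
split; first exact: self_dual_iff_conj_invariant.
by rewrite -self_dual_iff_conj_invariant //; apply: self_dual_iff_even_cumulants.
Qed.
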